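(* Let $\mathcal D=\{A_\lambda\}_{\lambda\in\Lambda}$ be a finite family of subsets of some set, with a decomposition $\Lambda=\Lambda_0\sqcup\Lambda_1\sqcup\dots\sqcup\Lambda_n$ (sets $A_\lambda$ with $\lambda\in\Lambda_r$ are said to have type $r$). Assume: (1) for any $A_{\lambda_1},A_{\lambda_2}\in\mathcal D$ of types $r_1,r_2$, $A_{\lambda_1}\cap A_{\lambda_2}$ is a finite union of sets from $\mathcal D$ of types at most $\min\{r_1,r_2\}$; (2) if $\lambda_1\ne\lambda_2$ and $A_{\lambda_1},A_{\lambda_2}$ have the same type $r$, then $A_{\lambda_1}\cap A_{\lambda_2}$ is a finite union of sets from $\mathcal D$ of types strictly less than $r$; (3) every finite union $X$ of elements of $\mathcal D$ has a unique reduced presentation $X=\bigcup_{j=1}^sA_{\lambda_j}$, i.e. one in which no $A_{\lambda_j}$ is contained in another $A_{\lambda_k}$. Let $\mathcal T$ be the family of all finite unions of elements of $\mathcal D$, and let $m:\Lambda\to\mathbb{C}$ be any function. Then there exists a unique function $\mu:\mathcal T\to\mathbb{C}$ with $\mu(A\cup B)=\mu(A)+\mu(B)-\mu(A\cap B)$ for all $A,B\in\mathcal T$ and $\mu(A_\lambda)=m(\lambda)$ for all $\lambda\in\Lambda$. *)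

From HB Require Import structures.
From mathcomp Require Import all_boot all_order all_algebra.
From mathcomp Require Import boolp classical_sets.
From mathcomp Require Import complex.
From mathcomp Require Import Rstruct.
From Stdlib Require Rdefinitions.

Set Implicit Arguments.
Unset Strict Implicit.
Unset Printing Implicit Defensive.

Import Order.TTheory GRing.Theory Num.Theory.
Local Open Scope ring_scope.
Local Open Scope classical_set_scope.

Definition CC : Type := complex Rdefinitions.R.

Section Family.
Variables (U : Type) (L : finType) (D : L -> set U).

Definition union_of (S : {set L}) : set U :=
  [set x | exists2 l, l \in S & D l x].

Definition fin_union_with (P : L -> Prop) (X : set U) : Prop :=
  exists S : {set L}, (forall l, l \in S -> P l) /\ X = union_of S.

Definition in_T (X : set U) : Prop := fin_union_with (fun _ => True) X.

Definition reduced_presentation (X : set U) (S : {set L}) : Prop :=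
  X = union_of S /\
  (forall j k, j \in S -> k \in S -> j != k -> ~ (D j `<=` D k)).

Definition is_valuation (m : L -> CC) (mu : set U -> CC) : Prop :=
  mu set0 = 0 /\
  (forall A B, in_T A -> in_T B ->
     mu (A `|` B) = (mu A + mu B - mu (A `&` B))) /\
  (forall l, mu (D l) = m l).

End Family.

From HB Require Import structures.
From mathcomp Require Import all_boot all_order all_algebra.
From mathcomp Require Import boolp classical_sets.
From mathcomp Require Import complex Rstruct.

(* Define weights [w] on the index set by Moebius inversion along inclusion,
   [m l = \sum_(D k `<=` D l) w k], and put [mu X := \sum_(D k `<=` X) w k].
   Uniqueness of reduced presentations forces a member contained in a finite
   union of members to lie in one of them, so the members below [A `|` B] are
   those below [A] or below [B], and [mu] is additive by inclusion-exclusion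
   for finite sums.  Any two valuations agree on [T] by induction on the
   number of members below [X], peeling one member off a reduced
   presentation. *)

Set Implicit Arguments.
Unset Strict Implicit.
Unset Printing Implicit Defensive.

Import GRing.Theory.
Local Open Scope classical_set_scope.

Lemma big_setU_setI (V : nmodType) (I : finType) (A B : {set I}) (F : I -> V) :
  (\sum_(i in A :|: B) F i + \sum_(i in A :&: B) F i
   = \sum_(i in A) F i + \sum_(i in B) F i)%R.
Proof.
rewrite (big_setID (A := A :|: B) A) (big_setID (A := B) A) /=.
rewrite finset.setIUl finset.setIid finset.setDUl finset.setDv finset.set0U.
rewrite (finset.setIC B A) (finset.setUidPl (subsetIl A B)).
by rewrite addrAC -addrA.
Qed.

Section Presentations.
Variables (U : Type) (L : finType) (D : L -> set U).

Lemma union_of_set0 : union_of D finset.set0 = set0.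
Proof. by rewrite predeqE => x; split => //; case=> l; rewrite inE. Qed.

Lemma union_of_set1 j : union_of D [set j]%SET = D j.
Proof.
rewrite predeqE => x; split; first by case=> l /set1P ->.
by exists j; rewrite ?set11.
Qed.

Lemma union_ofU (S1 S2 : {set L}) :
  union_of D (S1 :|: S2) = union_of D S1 `|` union_of D S2.
Proof.
rewrite predeqE => x; split.
  by case=> l /setUP [] lS Dlx; [left | right]; exists l.
by case=> -[l lS Dlx]; exists l; rewrite // inE lS ?orbT.
Qed.

Lemma union_of_setD1 j (S : {set L}) :
  j \in S -> union_of D S = D j `|` union_of D (S :\ j).
Proof. by move=> jS; rewrite -{1}(finset.setD1K jS) union_ofU union_of_set1. Qed.

Lemma union_of_setD1_sub j k (S : {set L}) :
  k \in S -> k != j -> D j `<=` D k -> union_of D (S :\ j) = union_of D S.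
Proof.
move=> kS kj Djk; rewrite predeqE => x; split.
  by case=> l /setD1P [_ lS] Dlx; exists l.
case=> l lS Dlx; have [lj | lj] := eqVneq l j.
  by exists k; [apply/setD1P | apply: Djk; rewrite -lj].
by exists l; first exact/setD1P.
Qed.

Lemma reduced_presentation_set1 j : reduced_presentation D (D j) [set j]%SET.
Proof.
split; first by rewrite union_of_set1.
by move=> a b /set1P -> /set1P ->; rewrite eqxx.
Qed.

Lemma reduced_presentation_exists (S : {set L}) :
  exists2 S' : {set L}, S' \subset S & reduced_presentation D (union_of D S) S'.
Proof.
pose P (S' : {set L}) := `[< union_of D S' = union_of D S >].
have [S' minS' S'S] := minset_exists (P := P) (asboolT erefl).
have /asboolP E := minsetp minS'.
exists S' => //; split=> // j k jS' kS' jk Djk.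
have E' : P (S' :\ j).
  by apply/asboolP; rewrite (union_of_setD1_sub kS') // eq_sym.
move: jS'; rewrite -(minsetinf minS' E' (subD1set S' j)).
by case/setD1P; rewrite eqxx.
Qed.

Definition subfamily (X : set U) : {set L} := [set k | `[< D k `<=` X >]].

Lemma subfamilyP k X : reflect (D k `<=` X) (k \in subfamily X).
Proof. by rewrite inE; apply: asboolP. Qed.

Lemma subfamilyS A B : A `<=` B -> subfamily A \subset subfamily B.
Proof.
move=> AB; apply/fintype.subsetP => k /subfamilyP DkA.
by apply/subfamilyP => x /DkA /AB.
Qed.

Lemma card_subfamily_lt A B i : A `<=` B -> D i `<=` B -> ~ D i `<=` A ->
  (#|subfamily A| < #|subfamily B|)%N.
Proof.
move=> AB DiB DiA; apply/proper_card/properP; split; first exact: subfamilyS.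
by exists i; apply/subfamilyP.
Qed.

Lemma subfamilyI A B : subfamily (A `&` B) = subfamily A :&: subfamily B.
Proof.
apply/setP => k; rewrite finset.in_setI; apply/subfamilyP/andP.
  by move=> DkAB; split; apply/subfamilyP => x /DkAB [].
by case=> /subfamilyP DkA /subfamilyP DkB x Dkx; split; [apply: DkA | apply: DkB].
Qed.

End Presentations.

Section MoebiusInversion.
Variables (U : Type) (L : finType) (D : L -> set U) (V : zmodType) (m : L -> V).

(* The fuel [n] stands in for well-founded recursion on
   [#|subfamily D (D l)|], which decreases along proper inclusions. *)
Fixpoint weight_rec (n : nat) (l : L) : V :=
  if n is n'.+1 then (m l - \sum_(k in subfamily D (D l) :\ l) weight_rec n' k)%R
  else 0%R.

Definition weight (l : L) : V := weight_rec #|L| l.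

Definition moebius_sum (X : set U) : V := (\sum_(k in subfamily D X) weight k)%R.

Hypothesis D_inj : injective D.

Lemma subfamily_rank_lt k l : k \in subfamily D (D l) :\ l ->
  (#|subfamily D (D k)| < #|subfamily D (D l)|)%N.
Proof.
case/setD1P => kl /subfamilyP DkDl; apply: (card_subfamily_lt (i := l)) => //.
by move=> DlDk; move/eqP: kl; apply; apply: D_inj; rewrite eqEsubset.
Qed.

Lemma weight_rec_stable n n' l : (#|subfamily D (D l)| <= n <= n')%N ->
  weight_rec n' l = weight_rec n l.
Proof.
elim: n n' l => [|n IH] n' l /andP [ln nn'].
  have : l \in subfamily D (D l) by apply/subfamilyP.
  by move: ln; rewrite leqn0 cards_eq0 => /eqP ->; rewrite inE.
case: n' nn' => // n' nn' /=.
congr (_ - _)%R; apply: eq_bigr => k kl; apply: IH; rewrite ltnS in nn'.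
by rewrite -ltnS (leq_trans (subfamily_rank_lt kl)).
Qed.

Lemma moebius_sum_family l : moebius_sum (D l) = m l.
Proof.
have ll : l \in subfamily D (D l) by apply/subfamilyP.
rewrite /moebius_sum (big_setD1 l ll) /weight.
rewrite -(@weight_rec_stable #|L| #|L|.+1 l) ?max_card ?leqnSn //=.
exact: subrK.
Qed.

End MoebiusInversion.

Section ReducedPresentations.
Variables (U : Type) (L : finType) (D : L -> set U).

Hypothesis reduced_presentation_unique : forall X : set U, in_T D X ->
  exists S : {set L}, reduced_presentation D X S /\
    forall S' : {set L}, reduced_presentation D X S' -> S' = S.

Lemma reduced_presentation_inj X (S1 S2 : {set L}) :
  reduced_presentation D X S1 -> reduced_presentation D X S2 -> S1 = S2.
Proof.
move=> red1 red2; have [|S [_ uniqS]] := @reduced_presentation_unique X.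
  by exists S1; case: red1.
by rewrite (uniqS _ red1) (uniqS _ red2).
Qed.

Lemma family_inj : injective D.
Proof.
move=> k l Dkl; apply: set1_inj; apply: (@reduced_presentation_inj (D k)).
  exact: reduced_presentation_set1.
by rewrite Dkl; apply: reduced_presentation_set1.
Qed.

Lemma family_neq0 l : D l <> set0.
Proof.
move=> Dl0; have red0 : reduced_presentation D set0 finset.set0.
  by split; [rewrite union_of_set0 | move=> j k; rewrite inE].
have red1 : reduced_presentation D set0 [set l]%SET.
  by rewrite -Dl0; apply: reduced_presentation_set1.
by have := set11 l; rewrite (reduced_presentation_inj red1 red0) inE.
Qed.

Lemma in_T_family l : in_T D (D l).
Proof. by exists [set l]%SET; rewrite union_of_set1. Qed.

Hypothesis family_setI : forall l1 l2 : L,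
  exists S : {set L}, D l1 `&` D l2 = union_of D S.

Lemma in_TI A B : in_T D A -> in_T D B -> in_T D (A `&` B).
Proof.
move=> [SA [_ ->]] [SB [_ ->]].
have [f Df] := choice (fun p : L * L => family_setI p.1 p.2).
exists (\bigcup_(i in SA) \bigcup_(j in SB) f (i, j))%SET; split => //.
rewrite predeqE => x; split.
  move=> [[i iSA Dix] [j jSB Djx]].
  have [l lf Dlx] : union_of D (f (i, j)) x by rewrite -Df.
  by exists l => //; apply/bigcupP; exists i => //; apply/bigcupP; exists j.
case=> l /bigcupP [i iSA /bigcupP [j jSB lf]] Dlx.
have [] : (D i `&` D j) x by rewrite (Df (i, j)); exists l.
by split; [exists i | exists j].
Qed.

(* Write [D j] as the union of the [D j `&` D i], i in [S], and compare a
   reduced subpresentation with the reduced presentation [[set j]]. *)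
Lemma sub_union_of j (S : {set L}) :
  D j `<=` union_of D S -> exists2 i, i \in S & D j `<=` D i.
Proof.
move=> DjS; have [f Df] := choice (family_setI j).
pose T := (\bigcup_(i in S) f i)%SET.
have DjT : D j = union_of D T.
  rewrite predeqE => x; split.
    move=> Djx; have [i iS Dix] := DjS x Djx.
    have [l lf Dlx] : union_of D (f i) x by rewrite -Df.
    by exists l => //; apply/bigcupP; exists i.
  case=> l /bigcupP [i iS lf] Dlx.
  by have [] : (D j `&` D i) x by rewrite Df; exists l.
have [T' T'T red] := reduced_presentation_exists D T.
rewrite -DjT in red.
have : j \in T by rewrite (fintype.subsetP T'T) // (reduced_presentation_inj red
  (reduced_presentation_set1 D j)) set11.
case/bigcupP => i iS jf; exists i => // x Djx.
by have [] : (D j `&` D i) x by rewrite Df; exists j.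
Qed.

Lemma subfamilyU A B : in_T D A -> in_T D B ->
  subfamily D (A `|` B) = subfamily D A :|: subfamily D B.
Proof.
move=> [SA [_ ->]] [SB [_ ->]]; apply/setP => k; rewrite finset.in_setU.
apply/subfamilyP/orP => [|[] /subfamilyP DkS x /DkS]; [|by left|by right].
rewrite -union_ofU => /sub_union_of [i /setUP [] iS DkDi];
  [left | right]; apply/subfamilyP => x /DkDi Dix; by exists i.
Qed.

Lemma moebius_sum_valuation (m : L -> CC) : is_valuation D m (moebius_sum D m).
Proof.
split; [|split].
- rewrite /moebius_sum (_ : subfamily D set0 = finset.set0) ?big_set0 //.
  apply/setP => k; rewrite finset.in_set0; apply/negbTE/subfamilyP => Dk0.
  by apply: (@family_neq0 k); rewrite -subset0.
- move=> A B TA TB; rewrite /moebius_sum subfamilyU // subfamilyI.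
  by apply: (canRL (addrK _)); apply: big_setU_setI.
- exact/moebius_sum_family/family_inj.
Qed.

Lemma valuation_unique (m : L -> CC) mu1 mu2 :
  is_valuation D m mu1 -> is_valuation D m mu2 ->
  forall X, in_T D X -> mu1 X = mu2 X.
Proof.
move=> [mu1_0 [mu1U mu1D]] [mu2_0 [mu2U mu2D]] X.
have [r ltXr] := ubnP #|subfamily D X|; elim: r => // r IH in X ltXr *.
case=> S0 [_ EX]; move: ltXr; rewrite {}EX.
have [S _ [-> red]] := reduced_presentation_exists D S0.
rewrite ltnS => ltSr.
have [->|[j jS]] := set_0Vmem S; first by rewrite union_of_set0 mu1_0 mu2_0.
rewrite (union_of_setD1 D jS) in ltSr *.
set Y := union_of D (S :\ j).
have [Y0 | [i /setD1P [ij iS]]] := set_0Vmem (S :\ j).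
  by rewrite /Y Y0 union_of_set0 setU0 mu1D mu2D.
have ltj : (#|subfamily D (D j)| < r)%N.
  apply: leq_trans ltSr; apply: (card_subfamily_lt (i := i)).
  - by move=> x; left.
  - by move=> x Dix; right; exists i => //; apply/setD1P.
  - exact: red.
have ltY : (#|subfamily D Y| < r)%N.
  apply: leq_trans ltSr; apply: (card_subfamily_lt (i := j)).
  - by move=> x; right.
  - by move=> x; left.
  - by case/sub_union_of => k /setD1P [kj kS]; apply: red; rewrite // eq_sym.
have ltI : (#|subfamily D (D j `&` Y)| < r)%N.
  by apply: leq_ltn_trans ltj; apply/subset_leq_card/subfamilyS => x [].
have Tj := in_T_family j.
have TY : in_T D Y by exists (S :\ j).
have TjY := in_TI Tj TY.
by rewrite mu1U ?mu2U // !IH.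
Qed.

End ReducedPresentations.

Theorem lemma2p2p2 (U : Type) (L : finType) (D : L -> set U) (n : nat)
  (typ : L -> 'I_n.+1)
  (H1 : forall l1 l2 : L,
     fin_union_with D (fun l => (typ l <= minn (typ l1) (typ l2))%N)
                    (D l1 `&` D l2))
  (H2 : forall l1 l2 : L, l1 != l2 -> typ l1 = typ l2 ->
     fin_union_with D (fun l => (typ l < typ l1)%N) (D l1 `&` D l2))
  (H3 : forall X : set U, in_T D X ->
     exists S : {set L}, reduced_presentation D X S /\
       forall S' : {set L}, reduced_presentation D X S' -> S' = S)
  (m : L -> CC) :
  exists mu : set U -> CC, is_valuation D m mu /\
    forall mu' : set U -> CC, is_valuation D m mu' ->
      forall X : set U, in_T D X -> mu' X = mu X.
Proof.
have family_setI l1 l2 : exists S : {set L}, D l1 `&` D l2 = union_of D S.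
  by have [S [_ E]] := H1 l1 l2; exists S.
have val_mu := moebius_sum_valuation H3 family_setI m.
by exists (moebius_sum D m); split=> // mu' val_mu'; apply: valuation_unique val_mu.
Qed.
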